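(* Let $(L,d)$ be a metric locale and $b\in L$ with $b\ne0$. Then there exist $c\in L$ with $0\ne c\le b$ and $n\in\mathbb{N}$ such that for every $x\in L$ with $d(x)<\frac1n$, either $x\wedge b^*=0$ or $x\wedge c=0$.
   Context: A frame (locale) $L$ is a complete lattice in which finite meets distribute over arbitrary joins; $b^*$ denotes the pseudocomplement of $b$. A diameter on $L$ is a map $d\colon L\to[0,+\infty]$ with (D1) $d(0)=0$; (D2) $a\le b\Rightarrow d(a)\le d(b)$; (D3) $a\wedge b\neq 0\Rightarrow d(a\vee b)\le d(a)+d(b)$; (D4) for every $\varepsilon>0$, $\bigvee\{a\in L\mid d(a)<\varepsilon\}=1$. Write $y\lhd_\varepsilon a$ if for every $c\in L$ with $d(c)<\varepsilon$, $c\wedge y\ne0$ implies $c\le a$. The diameter is admissible if $a=\bigvee\{y\in L\mid y\lhd_\varepsilon a \text{ for some }\varepsilon>0\}$ for all $a\in L$; a metric locale is a pair $(L,d)$ with $d$ an admissible diameter. *)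

From Stdlib Require Import Reals.
From Coquelicot Require Import Rbar.
Open Scope R_scope.

Record Frame := {
  carrier :> Type;
  fle : carrier -> carrier -> Prop;
  fle_refl : forall a, fle a a;
  fle_trans : forall a b c, fle a b -> fle b c -> fle a c;
  fle_antisym : forall a b, fle a b -> fle b a -> a = b;
  fmeet : carrier -> carrier -> carrier;
  fmeet_glb : forall a b c, fle c (fmeet a b) <-> (fle c a /\ fle c b);
  fsup : (carrier -> Prop) -> carrier;
  fsup_lub : forall (S : carrier -> Prop) c,
      fle (fsup S) c <-> (forall a, S a -> fle a c);
  fdistr : forall a (S : carrier -> Prop),
      fmeet a (fsup S) = fsup (fun y => exists s, S s /\ y = fmeet a s)
}.

Arguments fle {L} : rename.
Arguments fmeet {L} : rename.
Arguments fsup {L} : rename.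

Definition fbot (L : Frame) : L := fsup (fun _ : L => False).
Definition ftop (L : Frame) : L := fsup (fun _ : L => True).
Definition fjoin {L : Frame} (a b : L) : L := fsup (fun x => x = a \/ x = b).

Definition pcompl {L : Frame} (b : L) : L :=
  fsup (fun a => fmeet a b = fbot L).

Definition is_diameter (L : Frame) (d : L -> Rbar) : Prop :=
  (forall a, Rbar_le (Finite 0) (d a)) /\
  (d (fbot L) = Finite 0) /\
  (forall a b, fle a b -> Rbar_le (d a) (d b)) /\
  (forall a b, fmeet a b <> fbot L ->
      Rbar_le (d (fjoin a b)) (Rbar_plus (d a) (d b))) /\
  (forall eps : R, 0 < eps ->
      fsup (fun a => Rbar_lt (d a) (Finite eps)) = ftop L).

Definition rel_eps (L : Frame) (d : L -> Rbar) (eps : R) (y a : L) : Prop :=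
  forall c : L, Rbar_lt (d c) (Finite eps) ->
    fmeet c y <> fbot L -> fle c a.

Definition admissible (L : Frame) (d : L -> Rbar) : Prop :=
  forall a : L,
    a = fsup (fun y => exists eps : R, 0 < eps /\ rel_eps L d eps y a).

Definition metric_locale (L : Frame) (d : L -> Rbar) : Prop :=
  is_diameter L d /\ admissible L d.

From Stdlib Require Import Reals Classical.
From Coquelicot Require Import Rbar.
Open Scope R_scope.

(* Admissibility writes [b] as the join of the [y] with [y <|_eps b] for some
   [eps > 0]; as [b <> 0], one of them, [c], is nonzero, and [c <= b]. Choose
   [1/n < eps]. A small [x] that meets [c] lies below [b] by the definition of
   [<|_eps], hence misses the pseudocomplement [b^*]. *)

Section FrameFacts.

Variable L : Frame.

Lemma fbot_le (x : L) : fle (fbot L) x.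
Proof. apply fsup_lub. intros a []. Qed.

Lemma fsup_ub (S : L -> Prop) (a : L) : S a -> fle a (fsup S).
Proof. intros Sa. exact (proj1 (fsup_lub L S _) (fle_refl L _) a Sa). Qed.

Lemma fmeet_le_l (a b : L) : fle (fmeet a b) a.
Proof. exact (proj1 (proj1 (fmeet_glb L a b _) (fle_refl L _))). Qed.

Lemma fmeet_le_r (a b : L) : fle (fmeet a b) b.
Proof. exact (proj2 (proj1 (fmeet_glb L a b _) (fle_refl L _))). Qed.

Lemma fmeet_comm (a b : L) : fmeet a b = fmeet b a.
Proof.
  apply fle_antisym; apply fmeet_glb; split;
    (apply fmeet_le_r || apply fmeet_le_l).
Qed.

Lemma fsup_eq_fbot (S : L -> Prop) :
  (forall y, S y -> y = fbot L) -> fsup S = fbot L.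
Proof.
  intros HS. apply fle_antisym; [|apply fbot_le].
  apply fsup_lub. intros a Sa. rewrite (HS a Sa). apply fle_refl.
Qed.

Lemma fsup_neq_fbot (S : L -> Prop) :
  fsup S <> fbot L -> exists y, S y /\ y <> fbot L.
Proof.
  intros HS. apply NNPP. intros Hno. apply HS, fsup_eq_fbot.
  intros y Sy. apply NNPP. intros Hy. apply Hno. now exists y.
Qed.

Lemma fmeet_pcompl (b : L) : fmeet b (pcompl b) = fbot L.
Proof.
  unfold pcompl. rewrite fdistr. apply fsup_eq_fbot.
  intros y [s [Hs ->]]. now rewrite fmeet_comm.
Qed.

Lemma fmeet_pcompl_of_le (x b : L) : fle x b -> fmeet x (pcompl b) = fbot L.
Proof.
  intros Hxb. apply fle_antisym; [|apply fbot_le].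
  rewrite <- (fmeet_pcompl b). apply fmeet_glb. split.
  - exact (fle_trans L _ _ _ (fmeet_le_l _ _) Hxb).
  - apply fmeet_le_r.
Qed.

End FrameFacts.

Lemma admissible_rel_eps_nonzero (L : Frame) (d : L -> Rbar) (b : L) :
  admissible L d -> b <> fbot L ->
  exists (c : L) (eps : R),
    0 < eps /\ rel_eps L d eps c b /\ c <> fbot L /\ fle c b.
Proof.
  intros Hadm Hb. pose proof (Hadm b) as Eb. rewrite Eb in Hb.
  destruct (fsup_neq_fbot _ _ Hb) as [c [[eps [Heps Hrel]] Hc]].
  exists c, eps. repeat split; try assumption.
  rewrite Eb. apply fsup_ub. now exists eps.
Qed.

Lemma rel_eps_small_meet (L : Frame) (d : L -> Rbar) (eps : R) (c b x : L) :
  rel_eps L d eps c b -> Rbar_lt (d x) (Finite eps) ->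
  fmeet x (pcompl b) = fbot L \/ fmeet x c = fbot L.
Proof.
  intros Hrel Hx.
  destruct (classic (fmeet x c = fbot L)) as [Hxc|Hxc]; [now right|left].
  apply fmeet_pcompl_of_le, Hrel; assumption.
Qed.

Theorem lemma5p3 (L : Frame) (d : L -> Rbar) (Hd : metric_locale L d)
  (b : L) (Hb : b <> fbot L) :
  exists (c : L) (n : nat),
    c <> fbot L /\ fle c b /\ (0 < n)%nat /\
    forall x : L, Rbar_lt (d x) (Finite (1 / INR n)) ->
      fmeet x (pcompl b) = fbot L \/ fmeet x c = fbot L.
Proof.
  destruct Hd as [_ Hadm].
  destruct (admissible_rel_eps_nonzero L d b Hadm Hb)
    as [c [eps [Heps [Hrel [Hc Hcb]]]]].
  destruct (archimed_cor1 eps Heps) as [n [Hn Hn0]].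
  exists c, n. repeat split; try assumption.
  intros x Hx. apply (rel_eps_small_meet L d eps c b x Hrel).
  apply Rbar_lt_trans with (Finite (1 / INR n)); [exact Hx|].
  simpl. now rewrite Rdiv_1_l.
Qed.
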